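(* There is an isometric embedding of the partition space $(\mathcal{P}_{\ell,m},\delta_2)$ into the graph edit kernel space $(\mathcal{G}_{\ell,m},\delta_g)$, i.e. an injective map $f:\mathcal{P}_{\ell,m}\to\mathcal{G}_{\ell,m}$ with $\delta_g(f(X),f(Y))=\delta_2(X,Y)$ for all $X,Y\in\mathcal{P}_{\ell,m}$.
   Context: Fix $1\le\ell\le m$. $\mathcal{X} = \{\mathbf{X}\in[0,1]^{\ell\times m} : \mathbf{X}^T\mathbf{1}_\ell = \mathbf{1}_m\}$; $\Pi$ is the group of $\ell\times\ell$ permutation matrices; $\mathcal{P}_{\ell,m}$ is the set of orbits $\{\mathbf{P}\mathbf{X}:\mathbf{P}\in\Pi\}$ with metric $\delta_2(X,Y)=\min\{\|\mathbf{X}-\mathbf{Y}\|_2:\mathbf{X}\in X,\mathbf{Y}\in Y\}$ (Frobenius norm). An attributed graph of order $\ell$ with attributes in $\mathbb{R}^m$ is a triple $(\mathcal{V},\mathcal{E},\alpha)$ with $|\mathcal{V}|=\ell$, $\mathcal{E}\subseteq\mathcal{V}\times\mathcal{V}$, and $\alpha:\mathcal{V}\times\mathcal{V}\to\mathbb{R}^m$ such that for $i\ne j$, $\alpha(i,j)\ne\mathbf{0}$ iff $(i,j)\in\mathcal{E}$ (node attributes $\alpha(i,i)$ are arbitrary); $\mathcal{G}_{\ell,m}$ is the set of such graphs. With $\mathcal{V}=\{1,\dots,\ell\}$, a graph $G$ is represented by the $\ell\times\ell$ matrix $\mathbf{G}=(\mathbf{g}_{ij})$ with entries $\mathbf{g}_{ij}=\alpha(i,j)\in\mathbb{R}^m$,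 and graphs differing by relabeling of nodes are identified. The graph edit kernel metric is $\delta_g(G,H)=\min_{\mathbf{P}\in\Pi}\|\mathbf{G}-\mathbf{P}\mathbf{H}\mathbf{P}^T\|_2$, where for such block matrices $\|\mathbf{A}\|_2=\big(\sum_{i,j}\|\mathbf{a}_{ij}\|^2\big)^{1/2}$ and $\mathbf{P}\mathbf{H}\mathbf{P}^T$ permutes rows and columns of $\mathbf{H}$ simultaneously. *)

From HB Require Import structures.
From mathcomp Require Import all_boot all_order all_algebra all_fingroup.
From mathcomp Require Import boolp classical_sets reals.
Set Implicit Arguments. Unset Strict Implicit. Unset Printing Implicit Defensive.
Import Order.TTheory GRing.Theory Num.Theory.
Local Open Scope ring_scope.
Local Open Scope classical_set_scope.

Section Defs.
Variables (R : realType) (l m : nat).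

Definition is_partmx (X : 'M[R]_(l, m)) : Prop :=
  (forall i j, 0 <= X i j <= 1) /\ (forall j, \sum_(i < l) X i j = 1).

Definition frob (X : 'M[R]_(l, m)) : R :=
  Num.sqrt (\sum_(i < l) \sum_(j < m) (X i j) ^+ 2).

(* orbit {P X : P in Pi}; P X for a permutation matrix P is a row permutation *)
Definition part_orbit (X : 'M[R]_(l, m)) : set 'M[R]_(l, m) :=
  [set Y | exists s : 'S_l, Y = row_perm s X].

Definition PartSpace : Type :=
  {S : set 'M[R]_(l, m) | exists X, is_partmx X /\ S = part_orbit X}.

(* delta_2(X,Y) = min { ||X - Y||_2 : X in X, Y in Y } (a finite nonempty set) *)
Definition delta2 (S T : PartSpace) : R :=
  inf [set frob (X - Y) | X in proj1_sig S & Y in proj1_sig T].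

(* attributed graph on V = {1..l}: edge set E and attribute matrix
   (alpha(i,j))_{ij} with alpha(i,j) in R^m (row vectors) *)
Definition attr_graph : Type := ({set 'I_l * 'I_l} * 'M['rV[R]_m]_l)%type.

Definition wf_graph (G : attr_graph) : Prop :=
  forall i j : 'I_l, i != j -> (G.2 i j != 0) = ((i, j) \in G.1).

(* relabeling of nodes by a permutation s: corresponds to P G P^T *)
Definition relabel (s : 'S_l) (G : attr_graph) : attr_graph :=
  ([set p | (s p.1, s p.2) \in G.1]%SET, \matrix_(i, j) G.2 (s i) (s j)).

Definition permG (s : 'S_l) (A : 'M['rV[R]_m]_l) : 'M['rV[R]_m]_l :=
  \matrix_(i, j) A (s i) (s j).

Definition block_norm (A : 'M['rV[R]_m]_l) : R :=
  Num.sqrt (\sum_(i < l) \sum_(j < l) \sum_(k < m) (A i j 0 k) ^+ 2).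

Definition graph_orbit (G : attr_graph) : set attr_graph :=
  [set H | exists s : 'S_l, H = relabel s G].

Definition GraphSpace : Type :=
  {S : set attr_graph | exists G, wf_graph G /\ S = graph_orbit G}.

(* delta_g(G,H) = min_{P in Pi} ||G - P H P^T||_2, evaluated on representatives
   (the value does not depend on the chosen representatives) *)
Definition delta_g (S T : GraphSpace) : R :=
  inf [set r | exists (G H : attr_graph) (s : 'S_l),
          proj1_sig S G /\ proj1_sig T H /\ r = block_norm (G.2 - permG s H.2)].

End Defs.

From HB Require Import structures.
From mathcomp Require Import all_boot all_order all_algebra all_fingroup.
From mathcomp Require Import boolp classical_sets reals.
Set Implicit Arguments. Unset Strict Implicit. Unset Printing Implicit Defensive.
Import Order.TTheory GRing.Theory Num.Theory.
Local Open Scope ring_scope.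
Local Open Scope classical_set_scope.

(* A partition matrix X is sent to the edgeless graph whose node i carries the
   i-th row of X as attribute. Relabelling the nodes of this graph permutes the
   rows of X, and the block norm of a difference of such graphs is the Frobenius
   norm of the difference of the matrices, so the two sets whose infima define
   delta_g and delta_2 coincide. *)

Section NodeGraph.
Variables (R : realType) (l m : nat).

Definition diag_attr (X : 'M[R]_(l, m)) : 'M['rV[R]_m]_l :=
  \matrix_(i, j) (if i == j then row i X else 0).

Definition node_graph (X : 'M[R]_(l, m)) : attr_graph R l m :=
  (finset.set0, diag_attr X).

Lemma diag_attr_inj : injective diag_attr.
Proof.
move=> X Y /matrixP eqXY; apply/matrixP=> i j.
by have /rowP/(_ j) := eqXY i i; rewrite !mxE eqxx !mxE.
Qed.

Lemma node_graph_inj : injective node_graph.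
Proof. by move=> X Y /(congr1 snd)/diag_attr_inj. Qed.

Lemma node_graph_wf X : wf_graph (node_graph X).
Proof. by move=> i j nij; rewrite /= mxE (negbTE nij) eqxx inE. Qed.

Lemma permG_diag_attr s X : permG s (diag_attr X) = diag_attr (row_perm s X).
Proof.
apply/matrixP=> i j; rewrite !mxE (inj_eq perm_inj).
by case: eqP => // ->; apply/rowP=> k; rewrite !mxE.
Qed.

Lemma relabel_node_graph s X : relabel s (node_graph X) = node_graph (row_perm s X).
Proof.
congr pair; last exact: permG_diag_attr.
by apply/setP=> p; rewrite !inE.
Qed.

Lemma block_norm_diag_attrB X Y :
  block_norm (diag_attr X - diag_attr Y) = frob (X - Y).
Proof.
congr Num.sqrt; apply: eq_bigr => i _.
rewrite (bigD1 i) //= [X in _ + X]big1 ?addr0.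
  by apply: eq_bigr => k _; rewrite !mxE eqxx !mxE.
move=> j /negbTE nij; apply: big1 => k _.
by rewrite !mxE eq_sym nij !mxE subrr expr0n.
Qed.

Lemma node_graph_part_orbit X :
  node_graph @` part_orbit X = graph_orbit (node_graph X).
Proof.
apply/seteqP; split=> G.
  by move=> [_ [s ->] <-]; exists s; rewrite relabel_node_graph.
by move=> [s ->]; exists (row_perm s X); [exists s | rewrite relabel_node_graph].
Qed.

Lemma part_orbit_row_perm (S : PartSpace R l m) s Y :
  proj1_sig S Y -> proj1_sig S (row_perm s Y).
Proof.
case: S => S [X [_ eS]] /=; rewrite eS => -[t ->].
by exists (s * t)%g; rewrite row_permM.
Qed.

Lemma node_graph_image_graph_orbit (S : PartSpace R l m) :
  exists G, wf_graph G /\ node_graph @` proj1_sig S = graph_orbit G.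
Proof.
case: S => S [X [_ eS]] /=; rewrite eS.
by exists (node_graph X); split; [exact: node_graph_wf | exact: node_graph_part_orbit].
Qed.

Definition part_to_graph (S : PartSpace R l m) : GraphSpace R l m :=
  exist _ (node_graph @` proj1_sig S) (node_graph_image_graph_orbit S).

Lemma part_to_graph_inj : injective part_to_graph.
Proof.
move=> [S hS] [T hT] /(congr1 (@proj1_sig _ _)) /= eqST.
have eq_ST : S = T.
  by apply: funext => X; rewrite -[S X](image_inj node_graph_inj) eqST (image_inj node_graph_inj).
by subst T; congr exist; exact: Prop_irrelevance.
Qed.

Lemma delta_g_part_to_graph S T :
  delta_g (part_to_graph S) (part_to_graph T) = delta2 S T.
Proof.
congr inf; apply/seteqP; split=> r.
  move=> [_ [_ [s [[X SX <-] [[Y TY <-] ->]]]]].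
  exists X => //; exists (row_perm s Y); first exact: part_orbit_row_perm.
  by rewrite /= permG_diag_attr block_norm_diag_attrB.
move=> [X SX [Y TY <-]].
exists (node_graph X), (node_graph Y), 1%g.
split; first by exists X.
split; first by exists Y.
by rewrite /= permG_diag_attr row_perm1 block_norm_diag_attrB.
Qed.

End NodeGraph.

Theorem theorem5 (R : realType) (l m : nat) (hl : (1 <= l)%N) (hlm : (l <= m)%N) :
  exists f : PartSpace R l m -> GraphSpace R l m,
    injective f /\
    forall X Y : PartSpace R l m, delta_g (f X) (f Y) = delta2 X Y.
Proof.
exists (@part_to_graph R l m).
by split; [exact: part_to_graph_inj | exact: delta_g_part_to_graph].
Qed.
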